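(* Let $\psi\in\mathcal K^\star$ have radius of convergence $R_\psi>0$, apex $\tau$ and Khinchin family $(Y_t)$; for $t\in(0,R_\psi)$ let $q(t)$ be the extinction probability of the Galton–Watson process with offspring distribution $Y_t$. Then $q$ is differentiable on $(0,R_\psi)\setminus\{\tau\}$, and its derivative has a jump discontinuity at $t=\tau$: $$\lim_{t\downarrow\tau}\frac{q(t)-1}{t-\tau}=-\frac{2}{\tau},\qquad\lim_{t\uparrow\tau}\frac{q(t)-1}{t-\tau}=0.$$ Moreover, for all $t\in(0,R_\psi)\setminus\{\tau\}$, $$q'(t)=\frac{q(t)}{t}\left(\frac{1-m_\psi(t)}{1-m_\psi(tq(t))}-1\right).$$
   Context: $\mathcal K$ is the class of non-constant power series $f(z)=\sum_{n\ge0}a_nz^n$ with positive radius of convergence $R$, non-negative coefficients and $a_0>0$; its Khinchin family $(X_t)$ is given by $\mathbf P(X_t=n)=a_nt^n/f(t)$ for $n\ge0$, $t\in(0,R)$, with mean $m_f(t)=tf'(t)/f(t)$ (increasing in $t$). $\mathcal K^\star$ is the subclass of $f\in\mathcal K$ with $\lim_{t\uparrow R}m_f(t)>1$; the apex is the unique $\tau\in(0,R)$ with $m_f(\tau)=1$. The extinction probability is the probability that the Galton–Watson tree is finite. *)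

From Stdlib Require Import Reals.
From Coquelicot Require Export Coquelicot.
Open Scope R_scope.

Definition psf (a : nat -> R) (x : R) : R := PSeries a x.

Definition radius (a : nat -> R) : Rbar := CV_radius a.

Definition in_K (a : nat -> R) : Prop :=
  (forall n, 0 <= a n) /\ 0 < a 0%nat /\ (exists n, (1 <= n)%nat /\ a n <> 0)
  /\ Rbar_lt 0 (radius a).

Definition mean_f (a : nat -> R) (t : R) : R :=
  t * Derive (psf a) t / psf a t.

Definition Rbar_at_left (r : Rbar) : (R -> Prop) -> Prop :=
  within (fun x => Rbar_lt x r) (Rbar_locally' r).

Definition in_Kstar (a : nat -> R) : Prop :=
  in_K a /\ exists l : Rbar,
    filterlim (mean_f a) (Rbar_at_left (radius a)) (Rbar_locally l) /\ Rbar_lt 1 l.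

Definition is_apex (a : nat -> R) (tau : R) : Prop :=
  0 < tau /\ Rbar_lt tau (radius a) /\ mean_f a tau = 1.

(* Probability generating function of Y_t (P(Y_t = n) = a_n t^n / f(t)):
   E[s^{Y_t}] = f(t s) / f(t). *)
Definition pgf_Y (a : nat -> R) (t : R) (s : R) : R := psf a (t * s) / psf a t.

(* Extinction probability of the Galton-Watson process with offspring
   distribution Y_t: P(extinction) = lim_n P(Z_n = 0), and
   P(Z_n = 0) = G^{(n)}(0) (n-fold iterate of the offspring pgf G at 0). *)
Definition extinction_prob (a : nat -> R) (t : R) : R :=
  real (Lim_seq (fun n => Nat.iter n (pgf_Y a t) 0)).

From Stdlib Require Import Reals Lra Psatz Classical.
From Coquelicot Require Import Coquelicot.
Open Scope R_scope.

(* Write f for the generating function and phi(x) = f(x)/x for the slope of the chord from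
   the origin.  For s > 0, s is a fixed point of the offspring pgf s |-> f(ts)/f(t) iff
   phi(ts) = phi(t), and q(t) is the least fixed point in [0, 1].  The tangent intercept
   f(x) - x f'(x) = - x^2 phi'(x) decreases strictly and vanishes at the apex tau, so phi
   decreases on (0, tau] and increases on [tau, R).  Hence q = 1 on (0, tau], while for
   t > tau the point sigma(t) = t q(t) is the solution in (0, tau) of phi(sigma) = phi(t);
   implicit differentiation gives sigma' = phi'(t) / phi'(sigma), i.e. the formula for
   q' = (sigma / t)'.  At the apex phi'(tau) = 0 < phi''(tau), so phi(x) - phi(tau) behaves
   like phi''(tau) (x - tau)^2 / 2 on both sides; phi(t) = phi(sigma(t)) then forces
   tau - sigma(t) ~ t - tau, and (q(t) - 1) / (t - tau) = - (t - sigma(t)) / (t (t - tau))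
   tends to -2/tau. *)

Lemma is_derive_mvt (F dF : R -> R) (x y : R) :
  x < y -> (forall z, x <= z <= y -> is_derive F z (dF z)) ->
  exists c, x < c < y /\ F y - F x = dF c * (y - x).
Proof.
  intros Hxy HD.
  destruct (MVT_cor2 F dF x y Hxy) as [c [E Hc]].
  - intros z Hz. apply is_derive_Reals, HD, Hz.
  - exists c. split; assumption.
Qed.

Lemma derive_neg_decreasing (F dF : R -> R) (x y : R) :
  x < y -> (forall z, x <= z <= y -> is_derive F z (dF z)) ->
  (forall z, x < z < y -> dF z < 0) -> F y < F x.
Proof.
  intros Hxy HD Hneg.
  destruct (is_derive_mvt F dF x y Hxy HD) as [c [Hc E]].
  specialize (Hneg c Hc). nra.
Qed.

Lemma derive_pos_increasing (F dF : R -> R) (x y : R) :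
  x < y -> (forall z, x <= z <= y -> is_derive F z (dF z)) ->
  (forall z, x < z < y -> 0 < dF z) -> F x < F y.
Proof.
  intros Hxy HD Hpos.
  destruct (is_derive_mvt F dF x y Hxy HD) as [c [Hc E]].
  specialize (Hpos c Hc). nra.
Qed.

Lemma is_derive_continuous (F : R -> R) (x l : R) :
  is_derive F x l -> continuous F x.
Proof.
  intros H. apply (ex_derive_continuous (K := R_AbsRing) (V := R_NormedModule)).
  exists l. exact H.
Qed.

Lemma filterlim_within_locally {T : Type} {F : (T -> Prop) -> Prop} {FF : Filter F}
  (D : R -> Prop) (u : T -> R) (x : R) :
  filterlim u F (locally x) -> F (fun w => D (u w)) ->
  filterlim u F (within D (locally x)).
Proof.
  intros Hu HD P HP. unfold filtermap.
  apply (filter_imp (fun w => D (u w) /\ (D (u w) -> P (u w)))).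
  - intros w [Hw H]. exact (H Hw).
  - apply filter_and; [exact HD | exact (Hu _ HP)].
Qed.

Lemma filterlim_Rdiv {T : Type} {F : (T -> Prop) -> Prop} {FF : Filter F}
  (u v : T -> R) (l m : R) :
  m <> 0 -> filterlim u F (locally l) -> filterlim v F (locally m) ->
  filterlim (fun w => u w / v w) F (locally (l / m)).
Proof.
  intros Hm Hu Hv.
  apply (filterlim_comp_2 (H := locally (/ m)) u (fun w => / v w) Rmult Hu).
  - exact (filterlim_comp _ _ _ v Rinv F (locally m) _ Hv (continuous_Rinv m Hm)).
  - exact (filterlim_mult (K := R_AbsRing) l (/ m)).
Qed.

Lemma filterlim_decreasing_preimage {T : Type} {F : (T -> Prop) -> Prop} {FF : Filter F}
  (h : R -> R) (u : T -> R) (lo hi s : R) :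
  (forall x y, lo < x -> x < y -> y <= hi -> h y < h x) -> lo < s <= hi ->
  F (fun w => lo < u w <= hi) -> filterlim (fun w => h (u w)) F (locally (h s)) ->
  filterlim u F (locally s).
Proof.
  intros Hdec Hs Hdom Hlim.
  assert (Hsep : forall x y, lo < x <= hi -> lo < y <= hi -> h y < h x -> x < y).
  { intros x y Hx Hy Hh.
    destruct (Rtotal_order x y) as [L | [E | G]]; [exact L | subst; lra |].
    specialize (Hdec y x ltac:(lra) G ltac:(lra)). lra. }
  assert (Hnear : forall e, 0 < e -> F (fun w => Rabs (h (u w) - h s) < e)).
  { intros e He. exact (proj1 (filterlim_locally _ _) Hlim (mkposreal e He)). }
  apply filterlim_locally. intros eps. pose proof (cond_pos eps) as Heps.
  set (x1 := Rmax (s - eps / 2) ((lo + s) / 2)).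
  assert (Hx1 : lo < x1 < s /\ s - eps / 2 <= x1).
  { unfold x1. split; [split | apply Rmax_l].
    - eapply Rlt_le_trans; [| apply Rmax_r]. lra.
    - apply Rmax_lub_lt; lra. }
  assert (Hlow : F (fun w => x1 < u w)).
  { assert (Hh1 : h s < h x1) by (apply Hdec; lra).
    apply (filter_imp (fun w => (lo < u w <= hi) /\ Rabs (h (u w) - h s) < h x1 - h s)).
    - intros w [Hw Hh]. apply Rabs_def2 in Hh. apply Hsep; lra.
    - apply filter_and; [exact Hdom | apply Hnear; lra]. }
  assert (Hup : F (fun w => u w < s + eps)).
  { destruct (Req_dec s hi) as [E | Hne].
    - apply (filter_imp (fun w => lo < u w <= hi)); [intros w Hw; lra | exact Hdom].
    - set (x2 := Rmin (s + eps / 2) hi).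
      assert (Hx2 : s < x2 <= hi /\ x2 <= s + eps / 2).
      { unfold x2. split; [split | apply Rmin_l]; [apply Rmin_glb_lt; lra | apply Rmin_r]. }
      assert (Hh2 : h x2 < h s) by (apply Hdec; lra).
      apply (filter_imp (fun w => (lo < u w <= hi) /\ Rabs (h (u w) - h s) < h s - h x2)).
      + intros w [Hw Hh]. apply Rabs_def2 in Hh.
        assert (u w < x2) by (apply Hsep; lra). lra.
      + apply filter_and; [exact Hdom | apply Hnear; lra]. }
  apply (filter_imp (fun w => x1 < u w /\ u w < s + eps)).
  - intros w Hw. change (Rabs (u w - s) < eps). apply Rabs_def1; lra.
  - apply filter_and; assumption.
Qed.

Lemma is_derive_slope (F : R -> R) (x l : R) :
  is_derive F x l <-> filterlim (fun y => (F y - F x) / (y - x)) (locally' x) (locally l).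
Proof.
  rewrite is_derive_Reals. split.
  - intros H. apply filterlim_locally. intros eps.
    destruct (H eps (cond_pos eps)) as [d Hd]. exists d. intros y Hy Hyx. change R in y.
    change (Rabs (y - x) < d) in Hy. change (Rabs ((F y - F x) / (y - x) - l) < eps).
    specialize (Hd (y - x) ltac:(lra) Hy). replace (x + (y - x)) with y in Hd by ring.
    exact Hd.
  - intros H eps Heps.
    destruct (proj1 (filterlim_locally _ _) H (mkposreal eps Heps)) as [d Hd].
    exists d. intros h Hh0 Hh. specialize (Hd (x + h)).
    assert (Hball : ball x d (x + h)).
    { change (Rabs (x + h - x) < d). replace (x + h - x) with h by ring. exact Hh. }
    specialize (Hd Hball ltac:(lra)).
    change (Rabs ((F (x + h) - F x) / (x + h - x) - l) < eps) in Hd.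
    replace (x + h - x) with h in Hd by ring. exact Hd.
Qed.

Lemma is_derive_implicit (phi sig : R -> R) (t0 A B : R) :
  is_derive phi t0 A -> is_derive phi (sig t0) B -> B <> 0 -> continuous sig t0 ->
  locally t0 (fun t => phi (sig t) = phi t /\ (t <> t0 -> phi t <> phi t0)) ->
  is_derive sig t0 (A / B).
Proof.
  intros HA HB HB0 Hc Hloc.
  apply is_derive_slope in HA, HB. apply is_derive_slope.
  destruct (locally_singleton _ _ Hloc) as [Hfix0 _].
  assert (Hsep : locally' t0
            (fun t => phi (sig t) = phi t /\ phi t <> phi t0 /\ sig t <> sig t0)).
  { unfold locally', within.
    apply (filter_imp (fun t => phi (sig t) = phi t /\ (t <> t0 -> phi t <> phi t0)));
      [| exact Hloc].
    intros t [Hfix Hneq] Hne. specialize (Hneq Hne).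
    split; [exact Hfix | split; [exact Hneq |]].
    intros E. apply Hneq. rewrite <- Hfix, <- Hfix0, E. reflexivity. }
  assert (Hsig : filterlim sig (locally' t0) (locally' (sig t0))).
  { apply filterlim_within_locally.
    - exact (filterlim_filter_le_1 sig (filter_le_within _) Hc).
    - exact (filter_imp _ _ (fun t Ht => proj2 (proj2 Ht)) Hsep). }
  eapply filterlim_ext_loc;
    [| exact (filterlim_Rdiv _ _ _ _ HB0 HA (filterlim_comp _ _ _ sig _ _ _ _ Hsig HB))].
  eapply filter_imp; [| exact Hsep]. intros t [Hfix [Hneq Hsneq]]. cbv beta.
  rewrite Hfix, Hfix0.
  assert (phi t - phi t0 <> 0) by lra.
  assert (t <> t0) by (intros ->; lra).
  field. repeat split; lra.
Qed.

Lemma mvt_quadratic (F dF : R -> R) (x0 x : R) :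
  x <> x0 -> (forall z, Rabs (z - x0) <= Rabs (x - x0) -> is_derive F z (dF z)) ->
  exists c, 0 < Rabs (c - x0) < Rabs (x - x0) /\
    dF c * (x - x0) ^ 2 = 2 * (F x - F x0) * (c - x0).
Proof.
  intros Hx HD.
  (* Rolle's theorem for [h], which vanishes at [x0] and at [x]. *)
  set (h := fun y => (F y - F x0) * (x - x0) ^ 2 - (F x - F x0) * (y - x0) ^ 2).
  set (dh := fun y => dF y * (x - x0) ^ 2 - 2 * (F x - F x0) * (y - x0)).
  assert (Hh : forall z, Rabs (z - x0) <= Rabs (x - x0) -> is_derive h z (dh z)).
  { intros z Hz. pose proof (HD z Hz) as HFz. unfold h, dh. auto_derive.
    - exists (dF z). exact HFz.
    - replace (Derive (fun y => F y) z) with (dF z)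
        by (symmetry; exact (is_derive_unique _ _ _ HFz)).
      ring. }
  assert (Hroot : forall c, (h x - h x0) = dh c * (x - x0) -> dh c = 0).
  { intros c E. unfold h in E.
    assert (Hprod : dh c * (x - x0) = 0) by (rewrite <- E; ring).
    destruct (Rmult_integral _ _ Hprod) as [H0 | H0]; [exact H0 | lra]. }
  destruct (Rlt_or_le x0 x) as [Hlt | Hle].
  - destruct (is_derive_mvt h dh x0 x Hlt) as [c [Hc E]].
    { intros z Hz. apply Hh. rewrite !Rabs_pos_eq; lra. }
    exists c. split; [rewrite !Rabs_pos_eq; lra |].
    specialize (Hroot c E). unfold dh in Hroot. lra.
  - destruct (is_derive_mvt h dh x x0 ltac:(lra)) as [c [Hc E]].
    { intros z Hz. apply Hh. rewrite !Rabs_left1; lra. }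
    exists c. split; [rewrite !Rabs_left; lra |].
    assert (E' : h x - h x0 = dh c * (x - x0)) by lra.
    specialize (Hroot c E'). unfold dh in Hroot. lra.
Qed.

Lemma second_order_quotient (F dF : R -> R) (x0 K : R) :
  locally x0 (fun x => is_derive F x (dF x)) -> dF x0 = 0 -> is_derive dF x0 K ->
  filterlim (fun x => (F x - F x0) / (x - x0) ^ 2) (locally' x0) (locally (K / 2)).
Proof.
  intros [d0 HD] Hcrit HK.
  apply is_derive_slope in HK. rewrite Hcrit in HK.
  apply filterlim_locally. intros eps.
  destruct (proj1 (filterlim_locally _ _) HK eps) as [d Hd].
  exists (mkposreal (Rmin d d0) (Rmin_pos _ _ (cond_pos d) (cond_pos d0))).
  intros x Hx Hxx0. change R in x. change (Rabs (x - x0) < Rmin d d0) in Hx.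
  pose proof (Rmin_l d d0). pose proof (Rmin_r d d0).
  destruct (mvt_quadratic F dF x0 x Hxx0) as [c [Hc E]].
  { intros z Hz. apply HD. change (Rabs (z - x0) < d0). lra. }
  assert (Hcx0 : c <> x0) by (intros ->; rewrite Rminus_diag, Rabs_R0 in Hc; lra).
  specialize (Hd c ltac:(change (Rabs (c - x0) < d); lra) Hcx0).
  change (Rabs ((dF c - 0) / (c - x0) - K) < eps) in Hd.
  change (Rabs ((F x - F x0) / (x - x0) ^ 2 - K / 2) < eps).
  assert (Eq : (F x - F x0) / (x - x0) ^ 2 = (dF c - 0) / (c - x0) / 2).
  { assert (x - x0 <> 0) by lra. assert (c - x0 <> 0) by lra.
    field_simplify_eq; [nra | auto]. }
  rewrite Eq. apply Rabs_def2 in Hd. apply Rabs_def1; lra.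
Qed.

Lemma iter_least_fixpoint (G : R -> R) :
  (forall s s', 0 <= s -> s <= s' -> s' <= 1 -> G s <= G s') ->
  0 <= G 0 -> G 1 <= 1 -> (forall s, 0 <= s <= 1 -> continuous G s) ->
  let q := real (Lim_seq (fun n => Nat.iter n G 0)) in
  0 <= q <= 1 /\ G q = q /\ (forall p, 0 <= p <= 1 -> G p = p -> q <= p).
Proof.
  intros Hmono HG0 HG1 Hcont q.
  set (x := fun n => Nat.iter n G 0).
  assert (Hrange : forall n, 0 <= x n <= 1).
  { induction n as [| n IH]; simpl; [lra |]. split.
    - apply Rle_trans with (G 0); [exact HG0 | apply Hmono; lra].
    - apply Rle_trans with (G 1); [apply Hmono; lra | exact HG1]. }
  assert (Hincr : forall n, x n <= x (S n)).
  { induction n as [| n IH]; [exact HG0 |].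
    apply Hmono; [exact (proj1 (Hrange n)) | exact IH | exact (proj2 (Hrange (S n)))]. }
  assert (Hlim : is_lim_seq x q)
    by exact (Lim_seq_correct' x (ex_finite_lim_seq_incr x 1 Hincr (fun n => proj2 (Hrange n)))).
  assert (Hq : 0 <= q <= 1).
  { split.
    - exact (is_lim_seq_le (fun _ => 0) x 0 q (fun n => proj1 (Hrange n))
               (is_lim_seq_const 0) Hlim).
    - exact (is_lim_seq_le x (fun _ => 1) q 1 (fun n => proj2 (Hrange n))
               Hlim (is_lim_seq_const 1)). }
  split; [exact Hq | split].
  - assert (HGx : is_lim_seq (fun n => G (x n)) (G q))
      by exact (filterlim_comp _ _ _ x G _ _ _ Hlim (Hcont q Hq)).
    assert (Hshift : is_lim_seq (fun n => G (x n)) q)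
      by exact (proj1 (is_lim_seq_incr_1 x q) Hlim).
    pose proof (is_lim_seq_unique _ _ HGx) as E1. rewrite (is_lim_seq_unique _ _ Hshift) in E1.
    injection E1 as E1. symmetry. exact E1.
  - intros p Hp Hfix.
    assert (Hbelow : forall n, x n <= p).
    { induction n as [| n IH]; simpl; [lra |]. rewrite <- Hfix.
      apply Hmono; [exact (proj1 (Hrange n)) | exact IH | lra]. }
    exact (is_lim_seq_le x (fun _ => p) q p Hbelow Hlim (is_lim_seq_const p)).
Qed.

Lemma PSeries_ge_term (b : nat -> R) (x : R) (n : nat) :
  (forall k, 0 <= b k) -> 0 <= x -> Rbar_lt x (CV_radius b) -> b n * x ^ n <= PSeries b x.
Proof.
  intros Hb Hx Hr.
  set (u := fun k => b k * x ^ k).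
  assert (Hu : forall k, 0 <= u k)
    by (intros k; apply Rmult_le_pos; [apply Hb | apply pow_le; lra]).
  assert (Hs : is_series u (PSeries b x)).
  { apply Series_correct.
    destruct (CV_radius_inside b x) as [l Hl]; [rewrite Rabs_pos_eq; assumption |].
    exists l. eapply is_series_ext; [| exact Hl]. intros k.
    unfold u, scal; simpl. rewrite pow_n_pow. unfold mult; simpl. ring. }
  assert (Hpartial : forall m, 0 <= sum_n u m).
  { induction m as [| m IH]; [rewrite sum_O; apply Hu |].
    rewrite sum_Sn. apply Rplus_le_le_0_compat; [exact IH | apply Hu]. }
  apply Rle_trans with (sum_n u n).
  - destruct n as [| n]; [rewrite sum_O; apply Rle_refl |].
    rewrite sum_Sn. change (u (S n) <= sum_n u n + u (S n)). pose proof (Hpartial n). lra.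
  - apply (is_lim_seq_incr_compare (sum_n u) _ Hs). intros m.
    rewrite sum_Sn. change (sum_n u m <= sum_n u m + u (S m)). pose proof (Hu (S m)). lra.
Qed.

Lemma PSeries_nonneg (b : nat -> R) (x : R) :
  (forall k, 0 <= b k) -> 0 <= x -> Rbar_lt x (CV_radius b) -> 0 <= PSeries b x.
Proof.
  intros Hb Hx Hr. pose proof (PSeries_ge_term b x 0 Hb Hx Hr). pose proof (Hb 0%nat).
  simpl in *. lra.
Qed.

Lemma PS_derive_nonneg (b : nat -> R) : (forall n, 0 <= b n) -> forall n, 0 <= PS_derive b n.
Proof. intros Hb n. unfold PS_derive. apply Rmult_le_pos; [apply pos_INR | apply Hb]. Qed.

Section PowerSeries.

Variable a : nat -> R.
Hypothesis a_nonneg : forall n, 0 <= a n.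
Hypothesis a0_pos : 0 < a 0%nat.

Local Notation f := (psf a).
Local Notation f' := (PSeries (PS_derive a)).
Local Notation f'' := (PSeries (PS_derive (PS_derive a))).

Lemma lt_radius_le x y : x <= y -> Rbar_lt y (radius a) -> Rbar_lt x (radius a).
Proof. exact (Rbar_le_lt_trans x y (radius a)). Qed.

Lemma locally_in_radius lo x :
  lo < x -> Rbar_lt x (radius a) -> locally x (fun y => lo < y /\ Rbar_lt y (radius a)).
Proof.
  intros Hlo Hx. apply (open_and _ _ (open_gt lo) (open_Rbar_lt _)). split; assumption.
Qed.

Lemma abs_lt_radius x : 0 <= x -> Rbar_lt x (radius a) -> Rbar_lt (Rabs x) (CV_radius a).
Proof. intros Hx HxR. rewrite Rabs_pos_eq; assumption. Qed.

Lemma is_derive_psf x : 0 <= x -> Rbar_lt x (radius a) -> is_derive f x (f' x).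
Proof. intros Hx HxR. apply is_derive_PSeries, abs_lt_radius; assumption. Qed.

Lemma is_derive_psf' x : 0 <= x -> Rbar_lt x (radius a) -> is_derive f' x (f'' x).
Proof.
  intros Hx HxR. apply is_derive_PSeries. rewrite CV_radius_derive.
  apply abs_lt_radius; assumption.
Qed.

Lemma psf_pos x : 0 <= x -> Rbar_lt x (radius a) -> 0 < f x.
Proof.
  intros Hx HxR. pose proof (PSeries_ge_term a x 0 a_nonneg Hx HxR) as H.
  rewrite pow_O, Rmult_1_r in H. unfold psf. lra.
Qed.

Lemma psf'_nonneg x : 0 <= x -> Rbar_lt x (radius a) -> 0 <= f' x.
Proof.
  intros Hx HxR. apply PSeries_nonneg; [exact (PS_derive_nonneg a a_nonneg) | exact Hx |].
  rewrite CV_radius_derive. exact HxR.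
Qed.

Lemma psf_le x y : 0 <= x -> x <= y -> Rbar_lt y (radius a) -> f x <= f y.
Proof.
  intros Hx Hxy HyR. destruct (Req_dec x y) as [-> | Hne]; [apply Rle_refl |].
  destruct (is_derive_mvt f f' x y ltac:(lra)) as [c [Hc E]].
  - intros z Hz. apply is_derive_psf; [lra | apply (lt_radius_le z y); [lra | exact HyR]].
  - assert (0 <= f' c) by (apply psf'_nonneg; [lra | apply (lt_radius_le c y); [lra | exact HyR]]).
    nra.
Qed.

Definition chord_slope x := f x / x.

Definition tangent_intercept x := f x - x * f' x.

Lemma is_derive_tangent_intercept x :
  0 <= x -> Rbar_lt x (radius a) -> is_derive tangent_intercept x (- (x * f'' x)).
Proof.
  intros Hx HxR. unfold tangent_intercept.
  pose proof (is_derive_psf x Hx HxR) as H0. pose proof (is_derive_psf' x Hx HxR) as H1.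
  replace (- (x * f'' x)) with (f' x - (1 * f' x + x * f'' x)) by ring.
  apply (is_derive_minus f (fun y => y * f' y)); [exact H0 |].
  apply (is_derive_mult (fun y => y) f');
    [exact (is_derive_id (K := R_AbsRing) x) | exact H1 | intros; apply Rmult_comm].
Qed.

Lemma is_derive_chord_slope x :
  0 < x -> Rbar_lt x (radius a) -> is_derive chord_slope x (- tangent_intercept x / x ^ 2).
Proof.
  intros Hx HxR. unfold chord_slope, tangent_intercept.
  replace (- (f x - x * f' x) / x ^ 2) with ((f' x * x - f x * 1) / x ^ 2) by (field; lra).
  apply (is_derive_div f (fun y => y));
    [apply is_derive_psf; [lra | exact HxR] | exact (is_derive_id (K := R_AbsRing) x) | lra].
Qed.

Lemma one_sub_mean_f x :
  0 <= x -> Rbar_lt x (radius a) -> 1 - mean_f a x = tangent_intercept x / f x.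
Proof.
  intros Hx HxR. pose proof (psf_pos x Hx HxR) as Hf. unfold psf in Hf.
  unfold mean_f, tangent_intercept, psf.
  rewrite Derive_PSeries by (apply abs_lt_radius; assumption).
  field. lra.
Qed.

Section Offspring.

Variable t : R.
Hypothesis t_pos : 0 < t.
Hypothesis t_lt_radius : Rbar_lt t (radius a).

Lemma pgf_Y_pos s : 0 <= s <= 1 -> 0 < pgf_Y a t s.
Proof.
  intros Hs. unfold pgf_Y. apply Rdiv_lt_0_compat.
  - apply psf_pos; [nra | apply (lt_radius_le _ t); [nra | exact t_lt_radius]].
  - apply psf_pos; [lra | exact t_lt_radius].
Qed.

Lemma pgf_Y_le s s' : 0 <= s -> s <= s' -> s' <= 1 -> pgf_Y a t s <= pgf_Y a t s'.
Proof.
  intros Hs Hss' Hs'. unfold pgf_Y, Rdiv.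
  apply Rmult_le_compat_r; [apply Rlt_le, Rinv_0_lt_compat, psf_pos; [lra | exact t_lt_radius] |].
  apply psf_le; [nra | nra | apply (lt_radius_le _ t); [nra | exact t_lt_radius]].
Qed.

Lemma pgf_Y_1 : pgf_Y a t 1 = 1.
Proof.
  unfold pgf_Y. rewrite Rmult_1_r. apply Rinv_r.
  apply Rgt_not_eq, psf_pos; [lra | exact t_lt_radius].
Qed.

Lemma pgf_Y_continuous s : 0 <= s <= 1 -> continuous (pgf_Y a t) s.
Proof.
  intros Hs. apply (is_derive_continuous _ _ (t * f' (t * s) / f t)).
  pose proof (psf_pos t ltac:(lra) t_lt_radius).
  pose proof (is_derive_psf (t * s) ltac:(nra)
                (lt_radius_le (t * s) t ltac:(nra) t_lt_radius)) as Hf.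
  unfold pgf_Y. auto_derive.
  - exists (f' (t * s)). exact Hf.
  - replace (Derive (fun y => f y) (t * s)) with (f' (t * s))
      by (symmetry; exact (is_derive_unique _ _ _ Hf)).
    field. lra.
Qed.

Lemma extinction_prob_spec :
  let q := extinction_prob a t in
  0 < q <= 1 /\ pgf_Y a t q = q /\ (forall p, 0 <= p <= 1 -> pgf_Y a t p = p -> q <= p).
Proof.
  assert (HG0 : 0 <= pgf_Y a t 0) by (apply Rlt_le, pgf_Y_pos; lra).
  assert (HG1 : pgf_Y a t 1 <= 1) by (rewrite pgf_Y_1; apply Rle_refl).
  destruct (iter_least_fixpoint (pgf_Y a t) pgf_Y_le HG0 HG1 pgf_Y_continuous)
    as [Hq [Hfix Hleast]].
  cbv zeta. unfold extinction_prob. split; [split |]; [| tauto | tauto].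
  rewrite <- Hfix. apply pgf_Y_pos. exact Hq.
Qed.

Lemma pgf_Y_fixed_iff s : 0 < s -> pgf_Y a t s = s <-> chord_slope (t * s) = chord_slope t.
Proof.
  intros Hs. pose proof (psf_pos t ltac:(lra) t_lt_radius). unfold pgf_Y, chord_slope.
  split; intros E.
  - replace (f (t * s)) with (f (t * s) / f t * f t) by (field; lra).
    rewrite E. field. lra.
  - replace (f (t * s)) with (f (t * s) / (t * s) * (t * s)) by (field; nra).
    rewrite E. field. lra.
Qed.

End Offspring.

Section Apex.

Variable tau : R.
Hypothesis tau_apex : is_apex a tau.

Let tau_pos : 0 < tau := proj1 tau_apex.
Let tau_lt_radius : Rbar_lt tau (radius a) := proj1 (proj2 tau_apex).

Lemma tangent_intercept_apex : tangent_intercept tau = 0.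
Proof.
  pose proof (one_sub_mean_f tau (Rlt_le _ _ tau_pos) tau_lt_radius) as E.
  rewrite (proj2 (proj2 tau_apex)), Rminus_diag in E.
  pose proof (psf_pos tau (Rlt_le _ _ tau_pos) tau_lt_radius).
  replace (tangent_intercept tau) with (tangent_intercept tau / f tau * f tau) by (field; lra).
  rewrite <- E. ring.
Qed.

Lemma psf''_pos x : 0 < x -> Rbar_lt x (radius a) -> 0 < f'' x.
Proof.
  intros Hx HxR.
  set (b := PS_derive (PS_derive a)).
  assert (Hb : forall n, 0 <= b n) by exact (PS_derive_nonneg _ (PS_derive_nonneg a a_nonneg)).
  destruct (classic (exists n, b n <> 0)) as [[n Hn] | Hzero].
  - assert (Hbx : Rbar_lt x (CV_radius b)) by (unfold b; rewrite !CV_radius_derive; exact HxR).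
    pose proof (PSeries_ge_term b x n Hb (Rlt_le _ _ Hx) Hbx).
    assert (0 < b n) by (specialize (Hb n); lra).
    assert (0 < x ^ n) by (apply pow_lt; lra).
    nra.
  - (* Otherwise the tangent intercept would be constant, whereas it is [a 0 > 0] at [0]
       and [0] at the apex. *)
    exfalso.
    assert (Hb0 : forall y, PSeries b y = 0).
    { intros y. rewrite (PSeries_ext b (fun _ => 0)); [apply PSeries_const_0 |].
      intros n. destruct (Req_dec (b n) 0) as [E | Hne]; [exact E |].
      exfalso. apply Hzero. exists n. exact Hne. }
    destruct (is_derive_mvt tangent_intercept (fun z => - (z * f'' z)) 0 tau tau_pos)
      as [c [Hc E]].
    { intros z Hz. apply is_derive_tangent_intercept; [lra |].
      apply (lt_radius_le z tau); [lra | exact tau_lt_radius]. }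
    rewrite tangent_intercept_apex in E. fold b in E. rewrite Hb0 in E.
    unfold tangent_intercept, psf in E. rewrite PSeries_0 in E. lra.
Qed.

Lemma tangent_intercept_pos x : 0 <= x -> x < tau -> 0 < tangent_intercept x.
Proof.
  intros Hx Hxt. rewrite <- tangent_intercept_apex.
  apply (derive_neg_decreasing tangent_intercept (fun z => - (z * f'' z)) x tau Hxt).
  - intros z Hz. apply is_derive_tangent_intercept; [lra |].
    apply (lt_radius_le z tau); [lra | exact tau_lt_radius].
  - intros z Hz.
    pose proof (psf''_pos z ltac:(lra) (lt_radius_le z tau ltac:(lra) tau_lt_radius)). nra.
Qed.

Lemma tangent_intercept_neg x : tau < x -> Rbar_lt x (radius a) -> tangent_intercept x < 0.
Proof.
  intros Htx HxR. rewrite <- tangent_intercept_apex.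
  apply (derive_neg_decreasing tangent_intercept (fun z => - (z * f'' z)) tau x Htx).
  - intros z Hz. apply is_derive_tangent_intercept; [lra |].
    apply (lt_radius_le z x); [lra | exact HxR].
  - intros z Hz.
    pose proof (psf''_pos z ltac:(lra) (lt_radius_le z x ltac:(lra) HxR)). nra.
Qed.

Lemma chord_slope_decreasing x y : 0 < x -> x < y -> y <= tau -> chord_slope y < chord_slope x.
Proof.
  intros Hx Hxy Hy.
  apply (derive_neg_decreasing chord_slope (fun z => - tangent_intercept z / z ^ 2) x y Hxy).
  - intros z Hz. apply is_derive_chord_slope; [lra |].
    apply (lt_radius_le z tau); [lra | exact tau_lt_radius].
  - intros z Hz. pose proof (tangent_intercept_pos z ltac:(lra) ltac:(lra)).
    assert (0 < tangent_intercept z / z ^ 2) by (apply Rdiv_lt_0_compat; [lra | apply pow_lt; lra]).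
    unfold Rdiv in *. lra.
Qed.

Lemma chord_slope_increasing x y :
  tau <= x -> x < y -> Rbar_lt y (radius a) -> chord_slope x < chord_slope y.
Proof.
  intros Hx Hxy HyR.
  apply (derive_pos_increasing chord_slope (fun z => - tangent_intercept z / z ^ 2) x y Hxy).
  - intros z Hz. apply is_derive_chord_slope; [lra |].
    apply (lt_radius_le z y); [lra | exact HyR].
  - intros z Hz. pose proof (tangent_intercept_neg z ltac:(lra) (lt_radius_le z y ltac:(lra) HyR)).
    apply Rdiv_lt_0_compat; [lra | apply pow_lt; lra].
Qed.

Lemma extinction_prob_subcritical t : 0 < t -> t <= tau -> extinction_prob a t = 1.
Proof.
  intros Ht Htt.
  pose proof (lt_radius_le t tau Htt tau_lt_radius) as HtR.
  destruct (extinction_prob_spec t Ht HtR) as [[Hq0 Hq1] [Hfix _]].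
  destruct (Req_dec (extinction_prob a t) 1) as [E | Hne]; [exact E | exfalso].
  apply (pgf_Y_fixed_iff t Ht HtR _ Hq0) in Hfix.
  pose proof (chord_slope_decreasing (t * extinction_prob a t) t ltac:(nra) ltac:(nra) Htt).
  lra.
Qed.

Definition dual_param t := t * extinction_prob a t.

Lemma dual_param_supercritical t :
  tau < t -> Rbar_lt t (radius a) ->
  0 < dual_param t < tau /\ chord_slope (dual_param t) = chord_slope t.
Proof.
  intros Htt HtR. assert (Ht : 0 < t) by lra.
  destruct (extinction_prob_spec t Ht HtR) as [[Hq0 Hq1] [Hfix Hleast]].
  pose proof (psf_pos t (Rlt_le _ _ Ht) HtR).
  pose proof (psf_pos tau (Rlt_le _ _ tau_pos) tau_lt_radius).
  assert (Hgap : 0 < tau / t - pgf_Y a t (tau / t)).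
  { pose proof (chord_slope_increasing tau t (Rle_refl _) Htt HtR) as Hslope.
    unfold chord_slope in Hslope. unfold pgf_Y. replace (t * (tau / t)) with tau by (field; lra).
    apply (Rmult_lt_compat_r (tau * t)) in Hslope; [| nra].
    replace (f tau / tau * (tau * t)) with (f tau * t) in Hslope by (field; lra).
    replace (f t / t * (tau * t)) with (f t * tau) in Hslope by (field; lra).
    replace (tau / t - f tau / f t) with ((f t * tau - f tau * t) / (t * f t)) by (field; lra).
    apply Rdiv_lt_0_compat; nra. }
  (* The offspring pgf has a fixed point [p < tau / t < 1], which bounds the least one. *)
  destruct (Ranalysis5.IVT_interv (fun s => s - pgf_Y a t s) 0 (tau / t)) as [p [Hp Ep]].
  - intros s Hs. apply continuity_pt_filterlim.
    apply (continuous_minus (fun s => s) (pgf_Y a t)); [apply continuous_id |].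
    apply (pgf_Y_continuous t Ht HtR). split; [lra |].
    apply Rle_trans with (tau / t); [lra | apply Rlt_le, Rlt_div_l; lra].
  - apply Rdiv_lt_0_compat; lra.
  - pose proof (pgf_Y_pos t Ht HtR 0 ltac:(lra)). lra.
  - exact Hgap.
  - assert (Hpt : p < tau / t) by (destruct (Req_dec p (tau / t)) as [-> | ]; lra).
    assert (Hpt1 : tau / t < 1) by (apply Rlt_div_l; lra).
    assert (Hpos : 0 < p) by (pose proof (pgf_Y_pos t Ht HtR p ltac:(lra)); lra).
    pose proof (Hleast p ltac:(lra) ltac:(lra)).
    unfold dual_param. split.
    + split; [nra |]. apply Rle_lt_trans with (t * p); [nra |].
      apply (Rmult_lt_compat_l t) in Hpt; [| lra].
      replace (t * (tau / t)) with tau in Hpt by (field; lra). exact Hpt.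
    + apply (pgf_Y_fixed_iff t Ht HtR _ Hq0). exact Hfix.
Qed.

Lemma at_right_apex_in_radius : at_right tau (fun t => tau < t /\ Rbar_lt t (radius a)).
Proof.
  unfold at_right, within.
  eapply filter_imp; [| exact (locally_in_radius 0 tau tau_pos tau_lt_radius)].
  intros t [_ HtR] Ht. split; assumption.
Qed.

Lemma dual_param_continuous t : tau < t -> Rbar_lt t (radius a) -> continuous dual_param t.
Proof.
  intros Htt HtR.
  destruct (dual_param_supercritical t Htt HtR) as [Hs Hfix].
  pose proof (locally_in_radius tau t Htt HtR) as Hnear.
  apply (filterlim_decreasing_preimage chord_slope dual_param 0 tau (dual_param t)
           chord_slope_decreasing).
  - lra.
  - eapply filter_imp; [| exact Hnear]. intros y [Hy HyR].
    pose proof (dual_param_supercritical y Hy HyR). lra.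
  - rewrite Hfix. eapply filterlim_ext_loc.
    + eapply filter_imp; [| exact Hnear]. intros y [Hy HyR].
      symmetry. exact (proj2 (dual_param_supercritical y Hy HyR)).
    + exact (is_derive_continuous _ _ _ (is_derive_chord_slope t ltac:(lra) HtR)).
Qed.

Lemma dual_param_at_right : filterlim dual_param (at_right tau) (locally tau).
Proof.
  apply (filterlim_decreasing_preimage chord_slope dual_param 0 tau tau
           chord_slope_decreasing).
  - lra.
  - eapply filter_imp; [| exact at_right_apex_in_radius]. intros t [Ht HtR].
    pose proof (dual_param_supercritical t Ht HtR). lra.
  - eapply filterlim_ext_loc.
    + eapply filter_imp; [| exact at_right_apex_in_radius]. intros t [Ht HtR].
      symmetry. exact (proj2 (dual_param_supercritical t Ht HtR)).
    + exact (filterlim_filter_le_1 _ (filter_le_within _)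
               (is_derive_continuous _ _ _ (is_derive_chord_slope tau tau_pos tau_lt_radius))).
Qed.

Lemma is_derive_extinction_prob_subcritical t :
  0 < t -> t < tau ->
  is_derive (extinction_prob a) t
    (extinction_prob a t / t *
       ((1 - mean_f a t) / (1 - mean_f a (t * extinction_prob a t)) - 1)).
Proof.
  intros Ht Htt.
  pose proof (lt_radius_le t tau (Rlt_le _ _ Htt) tau_lt_radius) as HtR.
  rewrite (extinction_prob_subcritical t Ht (Rlt_le _ _ Htt)), Rmult_1_r.
  rewrite (one_sub_mean_f t (Rlt_le _ _ Ht) HtR).
  pose proof (tangent_intercept_pos t (Rlt_le _ _ Ht) Htt).
  pose proof (psf_pos t (Rlt_le _ _ Ht) HtR).
  replace (tangent_intercept t / f t / (tangent_intercept t / f t) - 1) with 0 by (field; lra).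
  rewrite Rmult_0_r.
  apply (is_derive_ext_loc (fun _ => 1)).
  - eapply filter_imp; [| exact (open_and _ _ (open_gt 0) (open_lt tau) t (conj Ht Htt))].
    intros y [Hy Hyt]. symmetry. apply extinction_prob_subcritical; lra.
  - exact (is_derive_const (K := R_AbsRing) (V := R_NormedModule) 1 t).
Qed.

Lemma is_derive_dual_param t :
  tau < t -> Rbar_lt t (radius a) ->
  is_derive dual_param t
    ((- tangent_intercept t / t ^ 2) / (- tangent_intercept (dual_param t) / dual_param t ^ 2)).
Proof.
  intros Htt HtR. assert (Ht : 0 < t) by lra.
  destruct (dual_param_supercritical t Htt HtR) as [[Hs0 Hs1] _].
  pose proof (lt_radius_le _ tau (Rlt_le _ _ Hs1) tau_lt_radius) as HsR.
  apply (is_derive_implicit chord_slope).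
  - exact (is_derive_chord_slope t Ht HtR).
  - exact (is_derive_chord_slope _ Hs0 HsR).
  - pose proof (tangent_intercept_pos _ (Rlt_le _ _ Hs0) Hs1).
    assert (0 < tangent_intercept (dual_param t) / dual_param t ^ 2)
      by (apply Rdiv_lt_0_compat; [lra | apply pow_lt; lra]).
    unfold Rdiv in *. lra.
  - exact (dual_param_continuous t Htt HtR).
  - eapply filter_imp; [| exact (locally_in_radius tau t Htt HtR)]. intros y [Hy HyR].
    split; [exact (proj2 (dual_param_supercritical y Hy HyR)) |]. intros Hne.
    destruct (Rlt_or_le y t) as [Hlt | Hle].
    + pose proof (chord_slope_increasing y t (Rlt_le _ _ Hy) Hlt HtR). lra.
    + pose proof (chord_slope_increasing t y (Rlt_le _ _ Htt) ltac:(lra) HyR). lra.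
Qed.

Lemma is_derive_extinction_prob_supercritical t :
  tau < t -> Rbar_lt t (radius a) ->
  is_derive (extinction_prob a) t
    (extinction_prob a t / t *
       ((1 - mean_f a t) / (1 - mean_f a (t * extinction_prob a t)) - 1)).
Proof.
  intros Htt HtR. assert (Ht : 0 < t) by lra.
  pose proof (is_derive_dual_param t Htt HtR) as Hsig.
  change (t * extinction_prob a t) with (dual_param t).
  destruct (dual_param_supercritical t Htt HtR) as [[Hs0 Hs1] Hfix].
  set (s := dual_param t) in *.
  pose proof (lt_radius_le s tau (Rlt_le _ _ Hs1) tau_lt_radius) as HsR.
  pose proof (tangent_intercept_neg t Htt HtR).
  pose proof (tangent_intercept_pos s (Rlt_le _ _ Hs0) Hs1).
  pose proof (psf_pos t (Rlt_le _ _ Ht) HtR).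
  apply (is_derive_ext_loc (fun y => dual_param y / y)).
  - eapply filter_imp; [| exact (open_gt 0 t Ht)]. intros y Hy.
    change (y * extinction_prob a y / y = extinction_prob a y). field. exact (Rgt_not_eq _ _ Hy).
  - replace (extinction_prob a t) with (s / t) by (unfold s, dual_param; field; lra).
    rewrite (one_sub_mean_f t (Rlt_le _ _ Ht) HtR), (one_sub_mean_f s (Rlt_le _ _ Hs0) HsR).
    assert (Efs : f s = s * f t / t).
    { unfold chord_slope in Hfix.
      replace (f s) with (f s / s * s) by (field; lra). rewrite Hfix. field. lra. }
    rewrite Efs.
    replace (s / t / t * (tangent_intercept t / f t / (tangent_intercept s / (s * f t / t)) - 1))
      with ((((- tangent_intercept t / t ^ 2) / (- tangent_intercept s / s ^ 2)) * t - s * 1)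
              / t ^ 2)
      by (field; repeat split; lra).
    apply (is_derive_div dual_param (fun y => y));
      [exact Hsig | exact (is_derive_id (K := R_AbsRing) t) | lra].
Qed.

Lemma is_derive2_chord_slope_apex :
  is_derive (fun x => - tangent_intercept x / x ^ 2) tau (f'' tau / tau).
Proof.
  pose proof (is_derive_tangent_intercept tau (Rlt_le _ _ tau_pos) tau_lt_radius) as H.
  auto_derive.
  - split; [exists (- (tau * f'' tau)); exact H |]. split; [nra | exact I].
  - replace (Derive (fun x => tangent_intercept x) tau) with (- (tau * f'' tau))
      by (symmetry; exact (is_derive_unique _ _ _ H)).
    rewrite tangent_intercept_apex. field. lra.
Qed.

Lemma chord_slope_second_order :
  filterlim (fun x => (chord_slope x - chord_slope tau) / (x - tau) ^ 2)
    (locally' tau) (locally (f'' tau / tau / 2)).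
Proof.
  apply (second_order_quotient chord_slope (fun x => - tangent_intercept x / x ^ 2)).
  - eapply filter_imp; [| exact (locally_in_radius 0 tau tau_pos tau_lt_radius)].
    intros x [Hx HxR]. exact (is_derive_chord_slope x Hx HxR).
  - rewrite tangent_intercept_apex. field. lra.
  - exact is_derive2_chord_slope_apex.
Qed.

Lemma dual_param_gap_ratio :
  filterlim (fun t => (tau - dual_param t) / (t - tau)) (at_right tau) (locally 1).
Proof.
  set (Q := fun x => (chord_slope x - chord_slope tau) / (x - tau) ^ 2).
  set (K := f'' tau / tau / 2).
  assert (HK : K <> 0).
  { apply Rgt_not_eq. unfold K. pose proof (psf''_pos tau tau_pos tau_lt_radius).
    apply Rdiv_lt_0_compat; [apply Rdiv_lt_0_compat |]; lra. }
  assert (HQt : filterlim Q (at_right tau) (locally K)).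
  { apply (filterlim_filter_le_1 Q (F := locally' tau)); [| exact chord_slope_second_order].
    intros P HP. unfold locally', within in HP. unfold at_right, within.
    eapply filter_imp; [| exact HP]. intros y Hy Hty. apply Hy. lra. }
  assert (HQs : filterlim (fun t => Q (dual_param t)) (at_right tau) (locally K)).
  { apply (filterlim_comp _ _ _ dual_param Q _ (locally' tau)); [| exact chord_slope_second_order].
    apply filterlim_within_locally; [exact dual_param_at_right |].
    eapply filter_imp; [| exact at_right_apex_in_radius]. intros t [Ht HtR].
    pose proof (dual_param_supercritical t Ht HtR). lra. }
  (* [chord_slope (dual_param t) = chord_slope t] makes the squared ratio equal to
     [Q t / Q (dual_param t)], whose two factors both tend to [K]. *)
  apply (filterlim_ext_loc (fun t => sqrt (Q t / Q (dual_param t)))).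
  - eapply filter_imp; [| exact at_right_apex_in_radius]. intros t [Ht HtR].
    destruct (dual_param_supercritical t Ht HtR) as [[Hs0 Hs1] Hfix].
    pose proof (chord_slope_increasing tau t (Rle_refl _) Ht HtR).
    unfold Q. rewrite Hfix.
    replace ((chord_slope t - chord_slope tau) / (t - tau) ^ 2 /
               ((chord_slope t - chord_slope tau) / (dual_param t - tau) ^ 2))
      with (((tau - dual_param t) / (t - tau)) ^ 2) by (field; repeat split; lra).
    apply sqrt_pow2. apply Rlt_le, Rdiv_lt_0_compat; lra.
  - replace 1 with (sqrt (K / K)) by (rewrite <- sqrt_1; f_equal; field; exact HK).
    exact (filterlim_comp _ _ _ _ sqrt _ _ _ (filterlim_Rdiv _ _ _ _ HK HQt HQs)
             (continuous_sqrt _)).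
Qed.

Lemma extinction_prob_slope_right :
  filterlim (fun t => (extinction_prob a t - 1) / (t - tau)) (at_right tau) (locally (- 2 / tau)).
Proof.
  set (r := fun t => (tau - dual_param t) / (t - tau)).
  apply (filterlim_ext_loc (fun t => - (1 + r t) / t)).
  - eapply filter_imp; [| exact at_right_apex_in_radius]. intros t [Ht HtR].
    unfold r, dual_param. field. split; lra.
  - replace (- 2 / tau) with (- (1 + 1) / tau) by (unfold Rdiv; ring).
    apply filterlim_Rdiv; [lra | |].
    + apply (filterlim_comp _ _ _ r (fun y => - (1 + y)) _ (locally 1));
        [exact dual_param_gap_ratio |].
      assert (Hd : is_derive (fun y => - (1 + y)) 1 (-1)) by (auto_derive; [exact I | ring]).
      exact (is_derive_continuous _ _ _ Hd).
    + exact (filterlim_filter_le_1 _ (filter_le_within _) (filterlim_id _ (locally tau))).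
Qed.

Lemma extinction_prob_slope_left :
  filterlim (fun t => (extinction_prob a t - 1) / (t - tau)) (at_left tau) (locally 0).
Proof.
  apply (filterlim_ext_loc (fun _ => 0)); [| apply filterlim_const].
  unfold at_left, within. eapply filter_imp; [| exact (open_gt 0 tau tau_pos)].
  intros t Ht Htt. rewrite (extinction_prob_subcritical t Ht (Rlt_le _ _ Htt)).
  unfold Rdiv. ring.
Qed.

End Apex.

End PowerSeries.

Theorem theorem6p8 (a : nat -> R) (tau : R) :
  in_Kstar a -> is_apex a tau ->
  let q := extinction_prob a in
  (forall t, 0 < t -> Rbar_lt t (radius a) -> t <> tau ->
     is_derive q t
       (q t / t * ((1 - mean_f a t) / (1 - mean_f a (t * q t)) - 1)))
  /\ filterlim (fun t => (q t - 1) / (t - tau)) (at_right tau) (locally (- 2 / tau))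
  /\ filterlim (fun t => (q t - 1) / (t - tau)) (at_left tau) (locally 0).
Proof.
  (* Beyond nonnegativity and [a 0 > 0], only the existence of the apex is used. *)
  intros [[Ha [Ha0 _]] _] Hapex q.
  split; [| split].
  - intros t Ht HtR Hne. destruct (Rlt_or_le t tau) as [Hlt | Hle].
    + exact (is_derive_extinction_prob_subcritical a Ha Ha0 tau Hapex t Ht Hlt).
    + exact (is_derive_extinction_prob_supercritical a Ha Ha0 tau Hapex t ltac:(lra) HtR).
  - exact (extinction_prob_slope_right a Ha Ha0 tau Hapex).
  - exact (extinction_prob_slope_left a Ha Ha0 tau Hapex).
Qed.
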